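(* For every positive integer $n$, $N'(n,1,n-1)=n$.
   Context: $\mathbb{Z}_4$ is the ring of integers modulo $4$; a $\mathbb{Z}_4$-code of length $n$ is a $\mathbb{Z}_4$-submodule of $\mathbb{Z}_4^n$. Two codes are equivalent if one is obtained from the other by permuting coordinates and changing the signs of some coordinates. Every $\mathbb{Z}_4$-code is permutation-equivalent to one with generator matrix $\begin{pmatrix} I_{k_1} & A & B \\ O & 2I_{k_2} & 2D\end{pmatrix}$ with $A,D$ $(0,1)$-matrices and $B$ a $\mathbb{Z}_4$-matrix; the code then has type $4^{k_1}2^{k_2}$. The trivial extension of a code $C$ of length $n-1$ is $\{(c,0)\mid c\in C\}$ (the only code of length $0$ is the zero code). $N'(n,k_1,k_2)$ denotes the number of equivalence classes of $\mathbb{Z}_4$-codes of length $n$ and type $4^{k_1}2^{k_2}$ that are not equivalent to the trivial extension of any $\mathbb{Z}_4$-code of length $n-1$. *)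

From HB Require Import structures.
From mathcomp Require Import all_boot all_order all_algebra all_fingroup.
Set Implicit Arguments. Unset Strict Implicit. Unset Printing Implicit Defensive.
Import GRing.Theory.
Local Open Scope ring_scope.

Notation Z4 := 'Z_4.

Definition is_code (n : nat) (C : {set 'rV[Z4]_n}) : bool :=
  [&& (0 : 'rV[Z4]_n) \in C,
      [forall x in C, forall y in C, x + y \in C]
    & [forall a : Z4, forall x in C, a *: x \in C]].

(* Type 4^k1 2^k2: C is isomorphic (as abelian group) to Z4^k1 x Z2^k2,
   i.e. |C| = 4^k1 2^k2 and the 2-torsion of C has 2^(k1+k2) elements. *)
Definition two_torsion (n : nat) (C : {set 'rV[Z4]_n}) : {set 'rV[Z4]_n} :=
  [set x in C | x *+ 2 == 0].

Definition has_type (n : nat) (C : {set 'rV[Z4]_n}) (k1 k2 : nat) : bool :=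
  (#|C| == 4 ^ k1 * 2 ^ k2)%N &&
  (#|two_torsion C| == 2 ^ (k1 + k2))%N.

Definition code_map (n : nat) (s : 'S_n) (e : {ffun 'I_n -> bool})
  (c : 'rV[Z4]_n) : 'rV[Z4]_n :=
  \row_i (if e i then - c 0 (s i) else c 0 (s i)).

Definition code_equiv (n : nat) (C D : {set 'rV[Z4]_n}) : bool :=
  [exists s : 'S_n, exists e : {ffun 'I_n -> bool},
     D == [set code_map s e c | c in C]].

(* (c, 0) : append a zero coordinate to a word of length n-1. *)
Definition ext_word (n : nat) (c : 'rV[Z4]_(n.-1)) : 'rV[Z4]_n :=
  \row_(i < n) (match @insub nat (fun k => (k < n.-1)%N) 'I_(n.-1) (val i) with
                | Some j => c 0 j
                | None => 0
                end).

Definition triv_ext (n : nat) (D : {set 'rV[Z4]_(n.-1)}) : {set 'rV[Z4]_n} :=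
  [set @ext_word n c | c in D].

Definition Nprime (n k1 k2 : nat) : nat :=
  #|[set [set D | code_equiv C D] | C in
      [set C : {set 'rV[Z4]_n} |
        [&& is_code C, has_type C k1 k2 &
            ~~ [exists D : {set 'rV[Z4]_(n.-1)},
                  is_code D && code_equiv C (@triv_ext n D)]]]]|.

(* A code of type 4^1 2^(n-1) has 2^(n+1) words and 2^n words of order
   dividing 2; since 2Z4^n also has 2^n words, the code contains all of 2Z4^n.
   Reduction mod 2 therefore maps it onto a one-dimensional binary code
   {0, 1_A}, and the code is the full preimage of {0, 1_A}.  Sign changes do
   not move odd supports and permutations act on them transitively among sets
   of equal size, so the classes are indexed by |A| in {1, ..., n}.  None is a
   trivial extension: every such code contains 2 e_n. *)

From mathcomp Require Import all_boot all_order all_algebra all_fingroup.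
Set Implicit Arguments. Unset Strict Implicit. Unset Printing Implicit Defensive.
Import GRing.Theory.
Local Open Scope ring_scope.

Definition odd4 (x : Z4) : bool := odd x.

Lemma odd4D (x y : Z4) : odd4 (x + y) = odd4 x (+) odd4 y.
Proof. by rewrite /odd4 /= odd_mod // oddD. Qed.

Lemma odd4M (x y : Z4) : odd4 (x * y) = odd4 x && odd4 y.
Proof. by rewrite /odd4 /= odd_mod // oddM. Qed.

Lemma odd4N (x : Z4) : odd4 (- x) = odd4 x.
Proof. by rewrite /odd4 /= odd_mod // oddB ?(ltnW (ltn_ord x)). Qed.

Lemma mul2_eq0_Z4 (x : Z4) : (x *+ 2 == 0) = ~~ odd4 x.
Proof. by case: x => [[|[|[|[|?]]]] ?]. Qed.

Lemma even_Z4E (x : Z4) : ~~ odd4 x -> x = (if x == 2 then 2 else 0).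
Proof. by case: x => [[|[|[|[|?]]]] ?] // _; apply: val_inj. Qed.

Lemma expn_type1 n : (0 < n)%N -> (4 ^ 1 * 2 ^ (n - 1) = 2 ^ n.+1)%N.
Proof. by case: n => // n _; rewrite subn1 /= !expnS mulnA. Qed.

Lemma exists_set_of_card (T : finType) k :
  (k <= #|T|)%N -> exists B : {set T}, #|B| = k.
Proof.
case/card_geqP=> s [uniq_s size_s _]; exists [set:: s].
by rewrite cardsE -size_s; apply/card_uniqP.
Qed.

Lemma exists_perm_preimset (T : finType) (A B : {set T}) :
  #|A| = #|B| -> exists s : {perm T}, s @^-1: B = A.
Proof.
move=> cardAB.
have uniq_enumC (C : {set T}) : uniq (enum C ++ enum (~: C)).
  rewrite cat_uniq !enum_uniq andbT /=.
  by apply/hasPn=> x; rewrite !mem_enum inE => /negbTE->.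
have mem_enumC (C : {set T}) x : x \in enum C ++ enum (~: C).
  by rewrite mem_cat !mem_enum inE orbN.
pose sA := enum A ++ enum (~: A); pose sB := enum B ++ enum (~: B).
have size_sAB : size sA = size sB by rewrite !size_cat -!cardE !cardsC.
pose f x := nth x sB (index x sA); pose g y := nth y sA (index y sB).
have fK : cancel f g.
  move=> x; have lt_x_sB : (index x sA < size sB)%N by rewrite -size_sAB index_mem mem_enumC.
  rewrite /g index_uniq ?uniq_enumC //.
  have /(set_nth_default x) -> : (index x sA < size sA)%N by rewrite index_mem mem_enumC.
  by rewrite nth_index ?mem_enumC.
exists (perm (can_inj fK)); apply/esym/eqP.
rewrite eqEcard card_preimset ?cardAB ?leqnn ?andbT; last exact: perm_inj.
apply/subsetP=> x xA; rewrite inE permE /f /sA /sB index_cat mem_enum xA nth_cat.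
have lt_xB : (index x (enum A) < size (enum B))%N.
  by rewrite -cardE -cardAB cardE index_mem mem_enum.
by rewrite lt_xB -(mem_enum (mem B)) mem_nth.
Qed.

Section LiftCode.

Variable n : nat.
Implicit Types (x y : 'rV[Z4]_n) (A B : {set 'I_n}) (C : {set 'rV[Z4]_n}).

Definition odd_supp x : {set 'I_n} := [set i | odd4 (x 0 i)].

Definition even_words : {set 'rV[Z4]_n} := [set x | odd_supp x == set0].

Definition lift_code A : {set 'rV[Z4]_n} := [set x | odd_supp x \in [set set0; A]].

Lemma in_odd_suppD x y i :
  (i \in odd_supp (x + y)) = (i \in odd_supp x) (+) (i \in odd_supp y).
Proof. by rewrite !inE mxE odd4D. Qed.

Lemma odd_suppN x : odd_supp (- x) = odd_supp x.
Proof. by apply/setP=> i; rewrite !inE mxE odd4N. Qed.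

Lemma odd_suppZ (a : Z4) x : odd_supp (a *: x) = if odd4 a then odd_supp x else set0.
Proof. by apply/setP=> i; rewrite !inE mxE odd4M; case: (odd4 a); rewrite ?inE. Qed.

Lemma odd_suppD_even x y : y \in even_words -> odd_supp (x + y) = odd_supp x.
Proof.
rewrite inE => /eqP y_even; apply/setP=> i.
by rewrite in_odd_suppD y_even in_set0 addbF.
Qed.

Lemma odd_suppB_eq x y : odd_supp x = odd_supp y -> x - y \in even_words.
Proof.
move=> eq_xy; rewrite inE; apply/eqP/setP=> i.
by rewrite in_odd_suppD odd_suppN eq_xy addbb in_set0.
Qed.

Lemma mul2_eq0_odd_supp x : (x *+ 2 == 0) = (odd_supp x == set0).
Proof.
apply/eqP/eqP=> [/rowP x2_eq0 | /setP x_even].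
- apply/setP=> i; have := x2_eq0 i.
  by rewrite mulmxnE mxE !inE => /eqP; rewrite mul2_eq0_Z4 => /negbTE.
- apply/rowP=> i; have := x_even i.
  by rewrite mulmxnE mxE !inE => /negbT; rewrite -mul2_eq0_Z4 => /eqP.
Qed.

Lemma two_torsionE C : two_torsion C = C :&: even_words.
Proof. by apply/setP=> x; rewrite !inE mul2_eq0_odd_supp. Qed.

Lemma card_even_words : #|even_words| = (2 ^ n)%N.
Proof.
pose dbl (b : 'rV[bool]_n) : 'rV[Z4]_n := map_mx (fun c : bool => if c then 2 else 0) b.
have dbl_inj : injective dbl.
  move=> b c /rowP eq_bc; apply/rowP=> i; have := eq_bc i.
  by rewrite !mxE; case: (b 0 i); case: (c 0 i).
have -> : even_words = dbl @: setT.
  apply/setP=> x; rewrite inE; apply/eqP/imsetP=> [/setP x_even | [b _ ->]].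
  - exists (map_mx (eq_op^~ 2) x) => //; apply/rowP=> i; rewrite !mxE.
    by have := x_even i; rewrite !inE => /negbT/even_Z4E {1}->; case: (x 0 i == 2).
  - by apply/setP=> i; rewrite !inE mxE; case: (b 0 i).
by rewrite card_imset // cardsT card_mx card_bool mul1n.
Qed.

Lemma lift_codeE A x :
  (x \in lift_code A) = (odd_supp x == set0) || (odd_supp x == A).
Proof. by rewrite !inE. Qed.

Lemma even_words_sub_lift_code A : even_words \subset lift_code A.
Proof. by apply/subsetP=> x; rewrite lift_codeE inE => ->. Qed.

Lemma lift_code_odd_supp v :
  lift_code (odd_supp v) = even_words :|: [set v + y | y in even_words].
Proof.
apply/setP=> x; rewrite in_setU lift_codeE inE; case: (odd_supp x =P set0) => //= _.
apply/eqP/imsetP=> [x_v | [y y_even ->]]; last exact: odd_suppD_even.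
by exists (x - v); [apply: odd_suppB_eq | rewrite addrC subrK].
Qed.

Lemma card_lift_code_odd_supp v :
  odd_supp v != set0 -> #|lift_code (odd_supp v)| = (2 ^ n.+1)%N.
Proof.
move=> v_odd; rewrite lift_code_odd_supp cardsU card_imset; last exact: addrI.
suff -> : even_words :&: [set v + y | y in even_words] = set0.
  by rewrite cards0 subn0 card_even_words expnS mul2n addnn.
apply/setP=> x; rewrite !inE; apply/andP=> -[x_even /imsetP [y y_even def_x]].
by move: v_odd; rewrite -(odd_suppD_even v y_even) -def_x x_even.
Qed.

Definition indicator A : 'rV[Z4]_n := \row_i (i \in A)%:R.

Lemma odd_supp_indicator A : odd_supp (indicator A) = A.
Proof. by apply/setP=> i; rewrite !inE mxE; case: (i \in A). Qed.

Lemma card_lift_code A : A != set0 -> #|lift_code A| = (2 ^ n.+1)%N.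
Proof.
by move=> A0; rewrite -(odd_supp_indicator A) card_lift_code_odd_supp ?odd_supp_indicator.
Qed.

Lemma lift_code_is_code A : is_code (lift_code A).
Proof.
apply/and3P; split.
- rewrite (subsetP (even_words_sub_lift_code A)) // inE.
  by apply/eqP/setP=> i; rewrite !inE mxE.
- apply/forall_inP=> x x_A; apply/forall_inP=> y y_A; rewrite lift_codeE.
  have even_of z : odd_supp z = set0 -> z \in even_words by rewrite inE => ->.
  move: x_A y_A; rewrite !lift_codeE.
  case/orP=> /eqP x_supp; case/orP=> /eqP y_supp.
  + by rewrite (odd_suppD_even _ (even_of _ y_supp)) x_supp eqxx.
  + by rewrite addrC (odd_suppD_even _ (even_of _ x_supp)) y_supp eqxx orbT.
  + by rewrite (odd_suppD_even _ (even_of _ y_supp)) x_supp eqxx orbT.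
  + have /odd_suppB_eq : odd_supp x = odd_supp (- y) by rewrite odd_suppN x_supp y_supp.
    by rewrite opprK inE => ->.
- apply/forallP=> a; apply/forall_inP=> x; rewrite !lift_codeE odd_suppZ.
  by case: (odd4 a); rewrite ?eqxx.
Qed.

Lemma lift_code_type A : (0 < n)%N -> A != set0 -> has_type (lift_code A) 1 (n - 1).
Proof.
move=> n_gt0 A0; rewrite /has_type card_lift_code // expn_type1 // eqxx /=.
by rewrite two_torsionE (setIidPr (even_words_sub_lift_code A)) card_even_words subnKC.
Qed.

Lemma lift_code_of_type C : (0 < n)%N -> is_code C -> has_type C 1 (n - 1) ->
  exists2 A, A != set0 & C = lift_code A.
Proof.
move=> n_gt0 /and3P [_ /forall_inP C_add _] /andP [/eqP card_C /eqP card_tors].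
rewrite expn_type1 // in card_C.
have even_sub_C : even_words \subset C.
  have /eqP <- : C :&: even_words == even_words.
    by rewrite eqEcard subsetIr -two_torsionE card_tors card_even_words subnKC ?leqnn.
  exact: subsetIl.
have : ~~ (C \subset even_words).
  by apply/negP=> /subset_leq_card; rewrite card_C card_even_words leqNgt ltn_exp2l ?ltnSn.
case/subsetPn=> v v_C; rewrite inE => v_odd; exists (odd_supp v) => //.
apply/esym/eqP; rewrite eqEcard card_lift_code_odd_supp // card_C leqnn andbT.
rewrite lift_code_odd_supp subUset even_sub_C; apply/subsetP=> _ /imsetP [y y_even ->].
by move/forall_inP: (C_add v v_C); apply; apply: (subsetP even_sub_C).
Qed.

Lemma lift_code_inj A B : A != set0 -> lift_code A = lift_code B -> A = B.
Proof.
move=> A0 eq_AB.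
have : indicator A \in lift_code B by rewrite -eq_AB lift_codeE odd_supp_indicator eqxx orbT.
by rewrite lift_codeE odd_supp_indicator (negbTE A0) => /eqP.
Qed.

Lemma odd_supp_code_map (s : 'S_n) e x :
  odd_supp (code_map s e x) = s @^-1: odd_supp x.
Proof. by apply/setP=> i; rewrite !inE mxE; case: (e i); rewrite ?odd4N. Qed.

Lemma code_map_inj (s : 'S_n) e : injective (code_map s e).
Proof.
move=> x y /rowP eq_xy; apply/rowP=> j; have := eq_xy (s^-1 j)%g.
by rewrite !mxE permKV; case: (e _) => // /oppr_inj.
Qed.

Lemma code_map_lift_code (s : 'S_n) e A :
  A != set0 -> code_map s e @: lift_code A = lift_code (s @^-1: A).
Proof.
move=> A0; apply/eqP; rewrite eqEcard card_imset; last exact: code_map_inj.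
rewrite !card_lift_code ?leqnn ?andbT //; last first.
  by rewrite -card_gt0 card_preimset ?card_gt0 //; apply: perm_inj.
apply/subsetP=> _ /imsetP [x x_A ->]; move: x_A.
by rewrite !lift_codeE odd_supp_code_map => /orP [] /eqP ->; rewrite ?preimset0 eqxx ?orbT.
Qed.

Definition lift_class m : {set {set 'rV[Z4]_n}} :=
  lift_code @: [set B : {set 'I_n} | #|B| == m].

Lemma code_equiv_lift_code A E :
  A != set0 -> code_equiv (lift_code A) E = (E \in lift_class #|A|).
Proof.
move=> A0; apply/existsP/imsetP=> [[s /existsP [e /eqP ->]] | [B]].
- exists (s @^-1: A); last exact: code_map_lift_code.
  by rewrite inE card_preimset //; apply: perm_inj.
- rewrite inE => /eqP card_B ->; have [s def_B] := exists_perm_preimset card_B.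
  by exists s; apply/existsP; exists [ffun=> false]; rewrite code_map_lift_code // def_B.
Qed.

Lemma lift_class_inj : {in [pred m | 0 < m <= n]%N &, injective lift_class}.
Proof.
move=> m m' /andP [m_gt0 m_le_n] _ eq_m.
have [B card_B] : exists B : {set 'I_n}, #|B| = m.
  by apply: exists_set_of_card; rewrite card_ord.
have : lift_code B \in lift_class m' by rewrite -eq_m imset_f // inE card_B.
case/imsetP=> B'; rewrite inE => /eqP card_B' eq_BB'.
by rewrite -card_B -card_B' -(lift_code_inj _ eq_BB') // -card_gt0 card_B.
Qed.

Lemma lift_classes_nonempty :
  [set lift_class #|A| | A : {set 'I_n} in [set A : {set 'I_n} | A != set0]]
  = [set lift_class k.+1 | k : 'I_n].
Proof.
apply/setP=> X; apply/imsetP/imsetP=> [[A] | [k _ ->]].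
- rewrite inE -card_gt0 => A_gt0 ->.
  have lt_A : (#|A|.-1 < n)%N by rewrite prednK // -[X in (_ <= X)%N]card_ord max_card.
  by exists (Ordinal lt_A); rewrite //= prednK.
- have [B card_B] : exists B : {set 'I_n}, #|B| = k.+1.
    by apply: exists_set_of_card; rewrite card_ord.
  by exists B; rewrite ?inE -?card_gt0 card_B.
Qed.

Lemma card_lift_classes : #|[set lift_class k.+1 | k : 'I_n]| = n.
Proof.
rewrite card_imset ?card_ord // => k k' /lift_class_inj eq_k.
by apply/val_inj/succn_inj/eq_k; rewrite inE /= ltn_ord.
Qed.

End LiftCode.

Lemma triv_ext_last n (D : {set 'rV[Z4]_n.-1}) y (lt_n : (n.-1 < n)%N) :
  y \in triv_ext D -> y 0 (Ordinal lt_n) = 0.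
Proof. by case/imsetP=> c _ ->; rewrite mxE insubF //= ltnn. Qed.

Lemma lift_code_not_equiv_triv_ext n (A : {set 'I_n}) (D : {set 'rV[Z4]_n.-1}) :
  (0 < n)%N -> A != set0 -> ~~ code_equiv (lift_code A) (triv_ext D).
Proof.
move=> n_gt0 A0; have lt_n : (n.-1 < n)%N by rewrite prednK.
rewrite code_equiv_lift_code //; apply/imsetP=> -[B _ eq_D].
pose w : 'rV[Z4]_n := 2 *: delta_mx 0 (Ordinal lt_n).
have : w \in lift_code B.
  by rewrite (subsetP (even_words_sub_lift_code B)) // inE odd_suppZ.
by rewrite -eq_D => /(triv_ext_last lt_n); rewrite !mxE !eqxx.
Qed.

Lemma nontrivial_type1_codeE n (C : {set 'rV[Z4]_n}) : (0 < n)%N ->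
  [&& is_code C, has_type C 1 (n - 1)
    & ~~ [exists D : {set 'rV[Z4]_n.-1}, is_code D && code_equiv C (triv_ext D)]]
  = (C \in @lift_code n @: [set A : {set 'I_n} | A != set0]).
Proof.
move=> n_gt0; apply/and3P/imsetP=> [[C_code C_type _] | [A A0 ->]].
  by have [A A0 ->] := lift_code_of_type n_gt0 C_code C_type; exists A; rewrite ?inE.
rewrite inE in A0; split; [exact: lift_code_is_code | exact: lift_code_type |].
by apply/existsP=> -[D /andP [_]]; apply/negP/lift_code_not_equiv_triv_ext.
Qed.

Theorem mainTheorem5 (n : nat) (hn : (0 < n)%N) : Nprime n 1 (n - 1) = n.
Proof.
rewrite /Nprime (_ : finset _ = @lift_code n @: [set A | A != set0]); last first.
  by apply/setP=> C; rewrite inE nontrivial_type1_codeE.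
rewrite -imset_comp (eq_in_imset (g := fun A : {set 'I_n} => lift_class n #|A|)).
  by rewrite lift_classes_nonempty card_lift_classes.
by move=> A; rewrite inE => A0; apply/setP=> E; rewrite inE /= code_equiv_lift_code.
Qed.
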